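(* Let $\rho\in\mathcal{D}(\mathbb{C}^m\otimes\mathbb{C}^n)$ be a separable state. Then for any $w,y\in[m]$ and $x,z\in[n]$, $$|\langle wx|\rho|yz\rangle|\le\sqrt{\min\big(\langle wx|\rho|wx\rangle,\langle wz|\rho|wz\rangle,\langle yx|\rho|yx\rangle,\langle yz|\rho|yz\rangle\big)},$$ and moreover $$|\langle wx|\rho|yz\rangle|\le\tfrac12\min\big(\langle wx|\rho|wx\rangle+\langle yz|\rho|yz\rangle,\ \langle wz|\rho|wz\rangle+\langle yx|\rho|yx\rangle\big).$$
   Context: $\mathcal{D}(\mathcal{H})$ denotes the set of density matrices on $\mathcal{H}$; $|wx\rangle=|w\rangle\otimes|x\rangle$ denotes computational basis vectors. A state is separable if it is a convex combination of product states $M\otimes N$ with $M,N$ density matrices. *)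

From mathcomp Require Import all_boot all_order all_algebra.
From mathcomp Require Import mxtens.
Set Implicit Arguments. Unset Strict Implicit. Unset Printing Implicit Defensive.
Import Order.TTheory GRing.Theory Num.Theory.
Local Open Scope ring_scope.

Definition adjmx (C : numClosedFieldType) (p q : nat) (A : 'M[C]_(p, q)) : 'M[C]_(q, p) :=
  (map_mx Num.conj A)^T.

Definition psdmx (C : numClosedFieldType) (d : nat) (A : 'M[C]_d) : Prop :=
  adjmx A = A /\ forall v : 'cV[C]_d, 0 <= (adjmx v *m A *m v) 0 0.

Definition density (C : numClosedFieldType) (d : nat) (A : 'M[C]_d) : Prop :=
  psdmx A /\ \tr A = 1.

Definition separable (C : numClosedFieldType) (m n : nat) (rho : 'M[C]_(m * n)) : Prop :=
  exists (k : nat) (p : 'I_k -> C) (M : 'I_k -> 'M[C]_m) (N : 'I_k -> 'M[C]_n),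
    [/\ forall i, 0 <= p i, \sum_i p i = 1,
        forall i, density (M i), forall i, density (N i) &
        rho = \sum_i p i *: (M i *t N i)].

Definition ket (C : numClosedFieldType) (d : nat) (i : 'I_d) : 'cV[C]_d := delta_mx i 0.

Definition ket2 (C : numClosedFieldType) (m n : nat) (w : 'I_m) (x : 'I_n) : 'cV[C]_(m * n) :=
  (ket C w) *t (ket C x).

Definition braket (C : numClosedFieldType) (d : nat) (u : 'cV[C]_d) (A : 'M[C]_d) (v : 'cV[C]_d) : C :=
  (adjmx u *m A *m v) 0 0.

(* Write rho = \sum_i p_i M_i (x) N_i, so that <wx|rho|yz> = \sum_i p_i M_i(w,y) N_i(x,z).
   Every 2x2 principal minor of a PSD matrix is nonnegative, hence
   |M_i(w,y) N_i(x,z)|^2 <= (M_i(w,w) N_i(z,z)) (M_i(y,y) N_i(x,x)), and the weighted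
   Cauchy-Schwarz inequality regroups these factors into
   |<wx|rho|yz>|^2 <= <wz|rho|wz> <yx|rho|yx>; positivity of rho alone gives the bound
   by <wx|rho|wx> <yz|rho|yz>. Diagonal entries of a density matrix lie in [0, 1], so each
   product is below each of its factors, and AM-GM turns the products into averages. *)
From mathcomp Require Import all_boot all_order all_algebra.
From mathcomp Require Import mxtens ring.
Set Implicit Arguments. Unset Strict Implicit. Unset Printing Implicit Defensive.
Import Order.TTheory GRing.Theory Num.Theory.
Local Open Scope ring_scope.

Lemma ler_AGM2_sqr (R : numDomainType) (E a b : R) :
  0 <= E -> 0 <= a -> 0 <= b -> E ^+ 2 <= a * b -> E *+ 2 <= a + b.
Proof.
move=> E0 a0 b0 Eab.
rewrite -ler_sqr ?nnegrE ?mulrn_wge0 ?addr_ge0 //.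
apply: le_trans (real_leif_AGM2_scaled (ger0_real a0) (ger0_real b0)).1.
by rewrite exprMn_n lerMn2r Eab orbT.
Qed.

Lemma ler_CauchySchwarz_weighted (R : numDomainType) (I : finType) (p t u v : I -> R) :
  (forall i, 0 <= p i) -> (forall i, 0 <= t i) -> (forall i, 0 <= u i) ->
  (forall i, 0 <= v i) -> (forall i, t i ^+ 2 <= u i * v i) ->
  (\sum_i p i * t i) ^+ 2 <= (\sum_i p i * u i) * (\sum_i p i * v i).
Proof.
move=> p0 t0 u0 v0 tuv.
have cross i j : t i * t j *+ 2 <= u i * v j + u j * v i.
  apply: ler_AGM2_sqr; rewrite ?mulr_ge0 // exprMn.
  apply: le_trans (ler_pM _ _ (tuv i) (tuv j)) _; rewrite ?exprn_ge0 //.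
  by rewrite mulrACA [X in _ <= X]mulrACA [v j * _]mulrC.
rewrite -(ler_pMn2r (isT : 0 < 2)%N).
have -> : (\sum_i p i * t i) ^+ 2 *+ 2 = \sum_i \sum_j p i * p j * (t i * t j *+ 2).
  rewrite expr2 big_distrlr -sumrMnl; apply: eq_bigr => i _.
  by rewrite -sumrMnl; apply: eq_bigr => j _; rewrite -!mulrnAr mulrACA.
have -> : (\sum_i p i * u i) * (\sum_i p i * v i) *+ 2 =
          \sum_i \sum_j p i * p j * (u i * v j + u j * v i).
  rewrite mulr2n big_distrlr [X in _ + X]exchange_big -big_split.
  by apply: eq_bigr => i _; rewrite -big_split; apply: eq_bigr => j _ /=; ring.
by do 2!(apply: ler_sum => ? _); apply: ler_wpM2l; [exact: mulr_ge0 | exact: cross].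
Qed.

Lemma real_le_min (R : numDomainType) (x y z : R) :
  y \is Num.real -> z \is Num.real -> (x <= Num.min y z) = (x <= y) && (x <= z).
Proof. by move=> Ry Rz; rewrite comparable_le_min // real_comparable. Qed.

Lemma ler_sqrtC_sqr (C : numClosedFieldType) (x y : C) : 0 <= x -> x ^+ 2 <= y -> x <= sqrtC y.
Proof.
move=> x0 xy; rewrite -(sqrCK x0) ler_sqrtC // nnegrE ?exprn_ge0 //.
exact: le_trans (exprn_ge0 _ x0) xy.
Qed.

Section PositiveSemidefinite.
Variable C : numClosedFieldType.

Lemma adjmxD (p q : nat) (A B : 'M[C]_(p, q)) : adjmx (A + B) = adjmx A + adjmx B.
Proof. by apply/matrixP=> i j; rewrite !mxE rmorphD. Qed.

Lemma adjmxZ (p q : nat) a (A : 'M[C]_(p, q)) : adjmx (a *: A) = a^* *: adjmx A.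
Proof. by apply/matrixP=> i j; rewrite !mxE rmorphM. Qed.

Lemma adjmx_delta (d : nat) (a : 'I_d) : adjmx (delta_mx a 0 : 'cV[C]_d) = delta_mx 0 a.
Proof. by apply/matrixP=> i j; rewrite !mxE; case: eqP; case: eqP; rewrite ?rmorph0 ?rmorph1. Qed.

Variables (d : nat) (A : 'M[C]_d).

Lemma braket_delta a b : braket (delta_mx a 0) A (delta_mx b 0) = A a b.
Proof. by rewrite /braket adjmx_delta -rowE -colE !mxE. Qed.

Lemma braket_delta2 a b al be :
  braket (al *: delta_mx a 0 + be *: delta_mx b 0) A (al *: delta_mx a 0 + be *: delta_mx b 0)
  = al^* * al * A a a + al^* * be * A a b + be^* * al * A b a + be^* * be * A b b.
Proof.
rewrite /braket adjmxD !adjmxZ !mulmxDl !mulmxDr -!scalemxAl -!scalemxAr.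
by rewrite !adjmx_delta -!rowE -!colE !mxE; ring.
Qed.

Hypothesis psdA : psdmx A.

Lemma psdmx_diag_ge0 a : 0 <= A a a.
Proof. by have := psdA.2 (delta_mx a 0); rewrite -/(braket _ _ _) braket_delta. Qed.

Lemma psdmx_conj a b : A b a = (A a b)^*.
Proof. by have /matrixP/(_ b a) <- := psdA.1; rewrite !mxE. Qed.

Lemma psdmx_minor2 a b : `|A a b| ^+ 2 <= A a a * A b b.
Proof.
have form al be : 0 <= al^* * al * A a a + al^* * be * A a b
                       + be^* * al * (A a b)^* + be^* * be * A b b.
  by have := psdA.2 (al *: delta_mx a 0 + be *: delta_mx b 0);
    rewrite -/(braket _ _ _) braket_delta2 (psdmx_conj a b).
have caa := psdmx_diag_ge0 a; have cbb := psdmx_diag_ge0 b.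
set r := A a b in form *.
set c := A a a in caa form *.
set e := A b b in cbb form *.
rewrite normCK -subr_ge0.
have ge0_e : 0 <= e * (c * e - r * r^*).
  by move: (form e (- r^*)); rewrite rmorphN /= conjCK (geC0_conj cbb); congr (_ <= _); ring.
have ge0_c : 0 <= c * (c * e - r * r^*).
  by move: (form (- r) c); rewrite rmorphN /= (geC0_conj caa); congr (_ <= _); ring.
have [c0|cpos] := eqVneq c 0; last by move: ge0_c; rewrite pmulr_rge0 // lt_def cpos.
have [e0|epos] := eqVneq e 0; last by move: ge0_e; rewrite pmulr_rge0 // lt_def epos.
have : 0 <= - (r * r^*) *+ 2.
  by move: (form 1 (- r^*)); rewrite rmorphN /= rmorph1 conjCK c0 e0; congr (_ <= _); ring.
by rewrite pmulrn_lge0 // c0 e0 mul0r add0r.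
Qed.

End PositiveSemidefinite.

Lemma density_diag_le1 (C : numClosedFieldType) (d : nat) (A : 'M[C]_d) a :
  density A -> A a a <= 1.
Proof.
case=> psdA <-; rewrite /mxtrace (bigD1 a) //= lerDl.
by apply: sumr_ge0 => i _; apply: psdmx_diag_ge0.
Qed.

Section Tensor.
Variables (C : numClosedFieldType) (m n : nat).

Lemma ket2_delta (w : 'I_m) (x : 'I_n) : ket2 C w x = delta_mx (mxtens_index (w, x)) 0.
Proof.
apply/matrixP=> i j; case: (mxtens_indexP i) => a b.
rewrite /ket2 /ket !mxE !mxtens_indexK (inj_eq (can_inj (@mxtens_indexK _ _))) /=.
rewrite xpair_eqE !(ord1 (_ : 'I_1)) eqxx !andbT.
by case: eqP; case: eqP; rewrite /= ?mulr1 ?mulr0 ?mul0r.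
Qed.

Lemma braket_ket2 (A : 'M[C]_(m * n)) w x y z :
  braket (ket2 C w x) A (ket2 C y z) = A (mxtens_index (w, x)) (mxtens_index (y, z)).
Proof. by rewrite !ket2_delta braket_delta. Qed.

Lemma sum_tensmxE k (p : 'I_k -> C) (M : 'I_k -> 'M[C]_m) (N : 'I_k -> 'M[C]_n) w x y z :
  (\sum_i p i *: (M i *t N i)) (mxtens_index (w, x)) (mxtens_index (y, z))
  = \sum_i p i * (M i w y * N i x z).
Proof. by rewrite summxE; apply: eq_bigr => i _; rewrite mxE tensmxE. Qed.

Lemma psd_tens_comb_crossed_minor (rho : 'M[C]_(m * n)) k (p : 'I_k -> C)
    (M : 'I_k -> 'M[C]_m) (N : 'I_k -> 'M[C]_n) w y x z :
  (forall i, 0 <= p i) -> (forall i, psdmx (M i)) -> (forall i, psdmx (N i)) ->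
  rho = \sum_i p i *: (M i *t N i) ->
  `|rho (mxtens_index (w, x)) (mxtens_index (y, z))| ^+ 2 <=
  rho (mxtens_index (w, z)) (mxtens_index (w, z)) *
  rho (mxtens_index (y, x)) (mxtens_index (y, x)).
Proof.
move=> p0 psdM psdN ->; rewrite !sum_tensmxE.
pose t i := `|M i w y| * `|N i x z|.
have t0 i : 0 <= t i by rewrite mulr_ge0.
apply: le_trans (_ : _ <= (\sum_i p i * t i) ^+ 2) _.
  rewrite ler_sqr ?nnegrE ?sumr_ge0 // => [|i _]; last by rewrite mulr_ge0.
  apply: le_trans (ler_norm_sum _ _ _) _; apply: ler_sum => i _.
  by rewrite !normrM (ger0_norm (p0 i)).
apply: (ler_CauchySchwarz_weighted (u := fun i => M i w w * N i z z)
                                   (v := fun i => M i y y * N i x x)) => // i;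
  rewrite ?mulr_ge0 ?psdmx_diag_ge0 //.
rewrite /t exprMn [X in _ <= X]mulrACA [N i z z * _]mulrC.
by rewrite ler_pM ?exprn_ge0 ?psdmx_minor2.
Qed.

End Tensor.

Theorem lemma4p3 (C : numClosedFieldType) (m n : nat) (rho : 'M[C]_(m * n)) :
  density rho -> separable rho ->
  forall (w y : 'I_m) (x z : 'I_n),
    let e := braket (ket2 C w x) rho (ket2 C y z) in
    let dwx := braket (ket2 C w x) rho (ket2 C w x) in
    let dwz := braket (ket2 C w z) rho (ket2 C w z) in
    let dyx := braket (ket2 C y x) rho (ket2 C y x) in
    let dyz := braket (ket2 C y z) rho (ket2 C y z) in
    `|e| <= sqrtC (Num.min (Num.min dwx dwz) (Num.min dyx dyz)) /\
    `|e| <= 2^-1 * Num.min (dwx + dyz) (dwz + dyx).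
Proof.
move=> dens_rho [k [p [M [N [p0 _ densM densN rho_sum]]]]] w y x z; cbv zeta.
rewrite !braket_ket2.
have d0 a : 0 <= rho a a := psdmx_diag_ge0 dens_rho.1 a.
have d1 a : rho a a <= 1 := density_diag_le1 a dens_rho.
have dR a : rho a a \is Num.real := ger0_real (d0 a).
have le_wxyz := psdmx_minor2 dens_rho.1 (mxtens_index (w, x)) (mxtens_index (y, z)).
have le_wzyx := psd_tens_comb_crossed_minor w y x z p0 (fun i => (densM i).1)
  (fun i => (densN i).1) rho_sum.
set e := rho _ (mxtens_index (y, z)) in le_wxyz le_wzyx *.
split.
  have factor_le a b :
      `|e| ^+ 2 <= rho a a * rho b b -> `|e| ^+ 2 <= rho a a /\ `|e| ^+ 2 <= rho b b.
    by move=> le_ab; split; apply: le_trans le_ab _; rewrite ?ler_piMr ?ler_piMl.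
  apply: ler_sqrtC_sqr => //; rewrite !real_le_min ?min_real //.
  by have [-> ->] := factor_le _ _ le_wxyz; have [-> ->] := factor_le _ _ le_wzyx.
rewrite ler_pdivlMl ?ltr0n // real_le_min ?realD // mulr_natl.
by rewrite !ler_AGM2_sqr ?addr_ge0.
Qed.
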